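(* Let $k,n$ be positive integers and $\tilde n\le n$ a positive real parameter. For every $\mathsf{Path}_k$-join tree $T$ and every $\mathsf{Path}_k$-pathset $\mathcal A$, \[\chi_T(\mathcal A)\ge\tilde n^{\Psi(T)}\cdot\mu(\mathcal A).\]
   Context: Graphs are finite simple graphs without isolated vertices; $\emptyset$ is the empty graph. $\mathsf{Path}_{\mathbb Z}$ has vertex set $\mathbb Z$ and edges $\{i-1,i\}$; $\mathsf{Path}_k$ is its subgraph with vertices $0,\dots,k$ and edges $\{i-1,i\}$, $1\le i\le k$. $\Delta(G)$ = number of connected components; $G\ominus F$ = union of components of $G$ sharing no vertex with $F$; $\Delta(G\mid F):=\Delta(G\ominus F)$; $\vec\Delta(H_1,\dots,H_r)=\sum_l\Delta(H_l\ominus(H_1\cup\dots\cup H_{l-1}))$. Join trees: for $G\subseteq\mathsf{Path}_k$, a $G$-join tree is a finite rooted binary tree (each non-leaf has an ordered left and right child) with nodes labeled by subgraphs of $G$: leaves by single-edge subgraphs of $G$ or $\emptyset$, each non-leaf by the union of its children's labels, the root by $G$. $T_1\cup T_2$ is the join tree with a new root whose left subtree is $T_1$ and right subtree $T_2$. For a $G$-join tree $T$ and a root-to-leaf path $b_1,\dots,b_\ell$, let $B_j$ ($j<\ell$) be the label of the child of $b_j$ other than $b_{j+1}$ and $B_\ell$ the label of leaf $b_\ell$; $\{B_1,\dots,B_\ell\}$ is a $T$-branch covering. $\Psi(T)$ is the maximum of $\vec\Delta(C_1,\dots,C_r)$ over all $T$-branch coverings $\mathcal C$ and all enumerations $C_1,\dots,C_r$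 (without repetition) of $\mathcal C$. Relations and pathsets: a $G$-relation is a set $\mathcal A\subseteq[n]^{V(G)}$. $\mathcal A\bowtie\mathcal B=\{\gamma\in[n]^{V(G)\cup V(H)}:\gamma_{V(G)}\in\mathcal A,\ \gamma_{V(H)}\in\mathcal B\}$ for a $G$-relation $\mathcal A$ and $H$-relation $\mathcal B$. $\mu(\mathcal A)=|\mathcal A|/n^{|V(G)|}$; for a graph $F$ with $I=V(F)\cap V(G)$, $\mu(\mathcal A\mid F)=\max_{\beta\in[n]^{V(F)}}|\{\alpha\in\mathcal A:\alpha_I=\beta_I\}|/n^{|V(G)\setminus V(F)|}$. A $G$-pathset is a $G$-relation $\mathcal A$ with $\mu(\mathcal A\mid F)\le(1/\tilde n)^{\Delta(G\mid F)}$ for all $F\subseteq\mathsf{Path}_k$; $\mathscr P_G$ denotes the set of $G$-pathsets. Pathset complexity: for a $G$-join tree $T$ and $\mathcal A\in\mathscr P_G$: if $T$ is a single node, $\chi_T(\mathcal A)=0$ if $G=\emptyset$ or $\mathcal A=\emptyset$ and $1$ otherwise; if $T=T_1\cup T_2$ with $T_i$ a $G_i$-join tree, $\chi_T(\mathcal A)$ is the minimum, over finite families $\{(\mathcal A_i,\mathcal B_i,\mathcal C_i)\}_i\subseteq\mathscr P_G\times\mathscr P_{G_1}\times\mathscr P_{G_2}$ with $\mathcal A_i\subseteq\mathcal B_i\bowtie\mathcal C_i$ and $\mathcal A\subseteq\bigcup_i\mathcal A_i$, of $\sum_i\max\{\chi_{T_1}(\mathcal B_i),\chi_{T_2}(\mathcal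 C_i)\}$. *)

From HB Require Import structures.
From mathcomp Require Import all_boot all_order all_algebra.
From mathcomp Require Import reals.
From Stdlib Require Import ClassicalEpsilon.

Set Implicit Arguments.
Unset Strict Implicit.
Unset Printing Implicit Defensive.

Import Order.TTheory GRing.Theory Num.Theory.

(* A graph without isolated vertices is determined
   by its edge set; edge j : 'I_k is the edge {j, j+1} of Path_k
   (i.e. the paper's edge {i-1,i} with i = j+1). *)

Section Graphs.
Variable k : nat.

Definition pgraph := {set 'I_k}.

Definition verts (G : pgraph) : {set 'I_k.+1} :=
  [set v : 'I_k.+1 | [exists j in G, (nat_of_ord v == nat_of_ord j)
                                    || (nat_of_ord v == (nat_of_ord j).+1)]].

Definition adj (G : pgraph) : rel 'I_k.+1 :=
  fun u v => [exists j in G,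
     ((nat_of_ord u == nat_of_ord j) && (nat_of_ord v == (nat_of_ord j).+1))
  || ((nat_of_ord v == nat_of_ord j) && (nat_of_ord u == (nat_of_ord j).+1))].

Definition comps (G : pgraph) : {set {set 'I_k.+1}} :=
  [set [set v | connect (adj G) u v] | u in verts G].

Definition Delta (G : pgraph) : nat := #|comps G|.

(* G (-) F : union of the components of G sharing no vertex with F *)
Definition ominus (G F : pgraph) : pgraph :=
  [set j in G | [forall v, connect (adj G) (widen_ord (leqnSn k) j) v
                             ==> (v \notin verts F)]].

Definition Delta_c (G F : pgraph) : nat := Delta (ominus G F).

Fixpoint vDelta_acc (acc : pgraph) (s : seq pgraph) : nat :=
  match s with
  | [::] => 0
  | H :: s' => Delta (ominus H acc) + vDelta_acc (acc :|: H) s'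
  end.
Definition vDelta (s : seq pgraph) : nat := vDelta_acc set0 s.

Inductive jtree : Type :=
| JLeaf of option 'I_k
| JNode of jtree & jtree.

Fixpoint label (T : jtree) : pgraph :=
  match T with
  | JLeaf (Some j) => [set j]
  | JLeaf None => set0
  | JNode T1 T2 => label T1 :|: label T2
  end.

Definition join_tree_of (G : pgraph) (T : jtree) : Prop := label T = G.

Fixpoint branches (T : jtree) : seq (seq pgraph) :=
  match T with
  | JLeaf e => [:: [:: label (JLeaf e)]]
  | JNode T1 T2 =>
      [seq label T2 :: B | B <- branches T1] ++
      [seq label T1 :: B | B <- branches T2]
  end.

Definition Psi (T : jtree) : nat :=
  \max_(B <- branches T) \max_(s <- permutations (undup B)) vDelta s.

End Graphs.

(* An element of [n]^{V} (V a set of vertices of Path_k) is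
   encoded as a finite function 'I_k.+1 -> option 'I_n whose domain
   (the vertices not mapped to None) is exactly V.  ([n] = 'I_n.) *)

Section Relations.
Variables (k n : nat).

Definition asg := {ffun 'I_k.+1 -> option 'I_n}.

Definition dom (a : asg) : {set 'I_k.+1} := [set x | a x != None].

Definition is_relation (G : pgraph k) (A : {set asg}) : bool :=
  [forall a in A, dom a == verts G].

Definition restrict (S : {set 'I_k.+1}) (g : asg) : asg :=
  [ffun x => if x \in S then g x else None].

Definition bowtie (G H : pgraph k) (A B : {set asg}) : {set asg} :=
  [set g : asg | [&& dom g == verts G :|: verts H,
                     restrict (verts G) g \in A & restrict (verts H) g \in B]].

Variable R : realType.
Local Open Scope ring_scope.

Definition mu (G : pgraph k) (A : {set asg}) : R :=
  (#|A|)%:R / (n%:R ^+ #|verts G|).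

Definition mu_c (G F : pgraph k) (A : {set asg}) : R :=
  (\max_(b : asg | dom b == verts F)
      #|[set a in A | [forall x in verts F :&: verts G, a x == b x]]|)%:R
  / (n%:R ^+ #|verts G :\: verts F|).

Variable nt : R.

Definition pathset (G : pgraph k) (A : {set asg}) : Prop :=
  is_relation G A /\
  forall F : pgraph k, mu_c G F A <= (1 / nt) ^+ Delta_c G F.

(* Classical minimum of a set of naturals (0 if the set is empty;
   the sets to which it is applied below are always nonempty). *)
Definition cmin (P : nat -> Prop) : nat :=
  match excluded_middle_informative (exists m, P m) with
  | left H =>
      @ex_minn (fun m => if excluded_middle_informative (P m) then true else false)
        (let: ex_intro m Hm := H in
         ex_intro _ m (match excluded_middle_informative (P m) as b
                         return (if b then true else false) with
                       | left _ => erefl true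
                       | right hn => False_ind _ (hn Hm)
                       end))
  | right _ => 0
  end.

Fixpoint chi (T : jtree k) (A : {set asg}) : nat :=
  match T with
  | JLeaf e => if (label (JLeaf e) == set0) || (A == set0) then 0 else 1
  | JNode T1 T2 =>
      cmin (fun m => exists fam : seq ({set asg} * {set asg} * {set asg}),
        (forall t, t \in fam ->
            [/\ pathset (label (JNode T1 T2)) t.1.1,
                pathset (label T1) t.1.2,
                pathset (label T2) t.2 &
                t.1.1 \subset bowtie (label T1) (label T2) t.1.2 t.2])
        /\ A \subset \bigcup_(t <- fam) t.1.1
        /\ m = \sum_(t <- fam) maxn (chi T1 t.1.2) (chi T2 t.2))
  end.

End Relations.

Definition pathk (k : nat) : pgraph k := setT.

From HB Require Import structures.
From mathcomp Require Import all_boot all_order all_algebra.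
From mathcomp Require Import reals.
From Stdlib Require Import ClassicalEpsilon.

Set Implicit Arguments.
Unset Strict Implicit.
Unset Printing Implicit Defensive.

Import Order.TTheory GRing.Theory Num.Theory.

(* A potential-function argument.  A schedule reveals subgraphs of Path_k one
   at a time, each flagged counted or uncounted; [dens] follows it and, on the
   vertices first revealed by each graph, averages (counted) or maximises
   (uncounted) over the values of the relation, ending with the indicator that
   what is left is nonempty.  When a branch covering of Path_k is fully
   counted, [dens] is at least mu(A); when a single graph Y is counted, the
   pathset condition bounds it by nt^-(the vDelta term of Y).  At a node
   T1 u T2, [dens] is subadditive over the optimal cover of A by products
   B_i |><| C_i; inside a product the counted label of T2 is made uncounted at
   the price of mu(C_i | graphs revealed so far) <= nt^-(its vDelta term),
   after which only the projection B_i matters and the induction continues in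
   T1.  Hence nt^vDelta(C) * dens(A) <= chi_T(A) for every enumeration C of a
   branch covering, and the one attaining Psi(T) gives the theorem. *)

Section PathGraphs.
Variable k : nat.
Implicit Types G H F : pgraph k.

Lemma verts0 : verts (set0 : pgraph k) = set0.
Proof. by apply/setP=> v; rewrite !inE; apply/existsP=> -[j]; rewrite inE. Qed.

Lemma vertsU G H : verts (G :|: H) = verts G :|: verts H.
Proof.
apply/setP=> v; rewrite !inE; apply/existsP/orP => [[j]|].
  by case/andP; rewrite inE => /orP[] jG vj; [left|right]; apply/existsP; exists j; rewrite jG.
by case=> /existsP[j /andP[jG vj]]; exists j; rewrite inE jG ?orbT.
Qed.

Lemma subset_verts G H : G \subset H -> verts G \subset verts H.
Proof.
move=> sGH; apply/subsetP=> v; rewrite !inE => /existsP[j /andP[jG vj]].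
by apply/existsP; exists j; rewrite (subsetP sGH).
Qed.

Lemma ominus_subset G F : ominus G F \subset G.
Proof. by apply/subsetP=> j; rewrite inE => /andP[]. Qed.

Lemma Delta_ominus0 F : Delta (ominus set0 F) = 0.
Proof.
have -> : ominus set0 F = set0 by apply/eqP; rewrite -subset0 ominus_subset.
by rewrite /Delta /comps verts0 imset0 cards0.
Qed.

Lemma verts_ominus G F : verts (ominus G F) \subset verts G :\: verts F.
Proof.
apply/subsetP=> v; rewrite inE => /existsP[j /andP[]].
rewrite inE => /andP[jG /forallP notF] vj.
have jv : connect (adj G) (widen_ord (leqnSn k) j) v.
  case/orP: vj => /eqP vj.
    by rewrite (_ : v = widen_ord (leqnSn k) j) ?connect0 //; apply: val_inj.
  by apply: connect1; apply/existsP; exists j; rewrite jG /= vj !eqxx.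
rewrite inE (implyP (notF v) jv) inE.
by apply/existsP; exists j; rewrite jG.
Qed.

Lemma Delta_c_le G F : Delta_c G F <= #|verts G :\: verts F|.
Proof.
apply: leq_trans (leq_imset_card _ _) _.
exact: subset_leq_card (verts_ominus G F).
Qed.

End PathGraphs.

Section Assignments.
Variables k n : nat.
Local Notation asg := (asg k n).
Implicit Types (S D : {set 'I_k.+1}) (a b x : asg) (A B C : {set asg}).

Definition fiber S x A := [set a in A | [forall v in S, a v == x v]].

Definition agree_on S A := forall a b, a \in A -> b \in A -> {in S, forall v, a v = b v}.

Lemma fiberP S x A a :
  reflect (a \in A /\ {in S, forall v, a v = x v}) (a \in fiber S x A).
Proof.
rewrite inE; apply: (iffP andP) => -[aA eq_ax]; split=> //.
  by move=> v vS; apply/eqP; apply: (implyP (forallP eq_ax v)).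
by apply/forall_inP=> v /eq_ax ->.
Qed.

Lemma fiber_subset S x A : fiber S x A \subset A.
Proof. by apply/subsetP=> a /fiberP[]. Qed.

Lemma fiber_set0 S x : fiber S x set0 = set0.
Proof. by apply/setP=> a; rewrite !inE. Qed.

Lemma fiberU S x A B : fiber S x (A :|: B) = fiber S x A :|: fiber S x B.
Proof. by apply/setP=> a; rewrite !inE andb_orl. Qed.

Lemma fiber0S x A : fiber set0 x A = A.
Proof. by apply/setP=> a; apply/fiberP/idP => [[]//|aA]; split=> // v; rewrite inE. Qed.

Lemma agree_on_verts0 A : agree_on (verts (set0 : pgraph k)) A.
Proof. by rewrite verts0 => a b _ _ v; rewrite inE. Qed.

Lemma agree_on_fiber S X x A :
  agree_on S A -> agree_on (S :|: X) (fiber (X :\: S) x A).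
Proof.
move=> agA a b /fiberP[aA ax] /fiberP[bA bx] v; rewrite inE.
case vS: (v \in S); first by move=> _; apply: agA.
by move=> /= vX; rewrite ax ?bx // inE vS.
Qed.

Lemma dom_eq0 x : (dom x == set0) = (x == [ffun=> None]).
Proof.
apply/eqP/eqP => [dom0|->]; last by apply/setP=> v; rewrite !inE ffunE.
by apply/ffunP=> v; move/setP: dom0 => /(_ v); rewrite !inE ffunE; case: (x v).
Qed.

Lemma dom_restrict S a : S \subset dom a -> dom (restrict S a) = S.
Proof.
move=> sSa; apply/setP=> v; rewrite !inE ffunE.
by case vS: (v \in S); rewrite //= -(in_set (fun v => a v != None)) (subsetP sSa).
Qed.

Lemma restrictT a : restrict setT a = a.
Proof. by apply/ffunP=> v; rewrite ffunE inE. Qed.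

Lemma restrict_restrict S D a : S \subset D -> restrict S (restrict D a) = restrict S a.
Proof.
by move=> sSD; apply/ffunP=> v; rewrite !ffunE; case: ifP => // /(subsetP sSD) ->.
Qed.

Lemma restrict_eq S a x : dom x = S -> {in S, forall v, a v = x v} -> restrict S a = x.
Proof.
move=> domx eq_ax; apply/ffunP=> v; rewrite ffunE.
case: ifP => vS; first exact: eq_ax.
by move: vS; rewrite -domx inE => /negbFE /eqP ->.
Qed.

Lemma card_fibers S A : {in A, forall a, S \subset dom a} ->
  #|A| = \sum_(x | dom x == S) #|fiber S x A|.
Proof.
move=> sSA; rewrite -sum1_card (partition_big (restrict S) (fun x => dom x == S)).
  apply: eq_bigr => x /eqP domx; rewrite -sum1_card; apply: eq_bigl => a.
  apply/andP/fiberP => -[aA]; last by move=> eq_ax; rewrite (restrict_eq domx eq_ax).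
  by move=> /eqP <-; split=> // v vS; rewrite ffunE vS.
by move=> a aA; rewrite dom_restrict ?sSA.
Qed.

Lemma sum_fibers_neq0 S A :
  \sum_(x | dom x == S) (fiber S x A != set0) <= #|restrict S @: A|.
Proof.
rewrite (eq_bigr (fun x => if fiber S x A != set0 then 1 else 0)); last first.
  by move=> x _; case: (_ != _).
rewrite -big_mkcondr sum1dep_card; apply/subset_leq_card/subsetP => x.
rewrite inE => /andP[/eqP domx /set0Pn[a /fiberP[aA eq_ax]]].
by apply/imsetP; exists a; rewrite // (restrict_eq domx eq_ax).
Qed.

Lemma bowtieP G1 G2 B C g :
  reflect [/\ dom g = verts G1 :|: verts G2, restrict (verts G1) g \in B
            & restrict (verts G2) g \in C]
          (g \in bowtie G1 G2 B C).
Proof. by rewrite inE; apply: (iffP and3P) => -[domg gB gC]; split=> //; exact/eqP. Qed.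

Lemma bowtieC G1 G2 B C : bowtie G1 G2 B C = bowtie G2 G1 C B.
Proof. by apply/setP=> g; apply/bowtieP/bowtieP; rewrite setUC => -[]. Qed.

Lemma fiber_restrict S D x A : S \subset D -> fiber S (restrict D x) A = fiber S x A.
Proof.
move=> sSD; apply/setP=> a; apply/fiberP/fiberP=> -[aA eq_ax]; split=> // v vS.
  by rewrite eq_ax // ffunE (subsetP sSD).
by rewrite ffunE (subsetP sSD) ?eq_ax.
Qed.

Lemma restrict_fiber S D x A B a :
  a \in fiber S x A -> restrict D a \in B -> restrict D a \in fiber S (restrict D x) B.
Proof.
by move=> /fiberP[_ eq_ax] aB; apply/fiberP; split=> // v vS; rewrite !ffunE eq_ax.
Qed.

Lemma fiber_bowtie S x G1 G2 A B C :
  A \subset bowtie G1 G2 B C ->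
  fiber S x A \subset bowtie G1 G2 (fiber S (restrict (verts G1) x) B) C.
Proof.
move=> sA; apply/subsetP=> a ax; have /fiberP[/(subsetP sA)/bowtieP[doma aB aC] _] := ax.
by apply/bowtieP; split=> //; apply: restrict_fiber ax aB.
Qed.

Hypothesis n_gt0 : 0 < n.

Lemma exists_extension S a :
  exists2 b, dom b = S & {in S, forall v, a v != None -> b v = a v}.
Proof.
exists [ffun v => if v \in S then Some (odflt (Ordinal n_gt0) (a v)) else None].
  by apply/setP=> v; rewrite !inE ffunE; case: (v \in S).
by move=> v vS; rewrite ffunE vS; case: (a v).
Qed.

End Assignments.

Lemma bigmax_attained (I : eqType) (r : seq I) (F : I -> nat) :
  r != [::] -> exists2 i, i \in r & \max_(j <- r) F j = F i.
Proof.
elim: r => // i r IHr _; rewrite big_cons.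
case: r IHr => [|j r] IHr; first by exists i; rewrite ?mem_head // big_nil maxn0.
have [i' i'r ->] := IHr isT; case: leqP => _.
  by exists i'; rewrite // inE i'r orbT.
by exists i; rewrite ?mem_head.
Qed.

Section Branches.
Variable k : nat.
Implicit Types (T : jtree k) (B : seq (pgraph k)).

Lemma branches_subset T B Y : B \in branches T -> Y \in B -> Y \subset label T.
Proof.
elim: T B => [e|T1 IH1 T2 IH2] B /=.
  by rewrite inE => /eqP ->; rewrite inE => /eqP ->.
rewrite mem_cat => /orP[] /mapP[B' B'T ->]; rewrite inE => /orP[/eqP->|YB'].
- exact: subsetUr.
- exact: subset_trans (IH1 _ B'T YB') (subsetUl _ _).
- exact: subsetUl.
- exact: subset_trans (IH2 _ B'T YB') (subsetUr _ _).
Qed.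

Lemma branches_cover T B j :
  B \in branches T -> j \in label T -> exists2 Y, Y \in B & j \in Y.
Proof.
elim: T B => [e|T1 IH1 T2 IH2] B /=.
  by rewrite inE => /eqP -> je; exists (label (JLeaf e)); rewrite ?mem_head.
rewrite mem_cat => /orP[] /mapP[B' B'T ->]; rewrite inE => /orP[] jT.
- by have [Y YB' jY] := IH1 _ B'T jT; exists Y; rewrite // inE YB' orbT.
- by exists (label T2); rewrite ?mem_head.
- by exists (label T1); rewrite ?mem_head.
- by have [Y YB' jY] := IH2 _ B'T jT; exists Y; rewrite // inE YB' orbT.
Qed.

Lemma Psi_attained T :
  exists2 B, B \in branches T & exists2 s, perm_eq s (undup B) & Psi T = vDelta s.
Proof.
rewrite /Psi; have [|B BT ->] := bigmax_attained (r := branches T)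
  (fun B => \max_(s <- permutations (undup B)) vDelta s).
  by elim: T => //= T1 + T2 _; case: (branches T1).
have [|s s_perm ->] := bigmax_attained (r := permutations (undup B)) (@vDelta k).
  by apply/eqP => /(congr1 (fun r => undup B \in r)); rewrite mem_permutations perm_refl.
by exists B => //; exists s; rewrite // -mem_permutations.
Qed.

End Branches.

Lemma cmin_spec (P : nat -> Prop) : (exists m, P m) -> P (cmin P).
Proof.
move=> exP; rewrite /cmin; case: excluded_middle_informative => [exP'|/(_ exP)//].
by case: ex_minnP => m Pm _; move: Pm; case: excluded_middle_informative.
Qed.

Section Schedules.
Variable k : nat.

Definition schedule := seq (bool * pgraph k).
Implicit Types (acc Y : pgraph k) (L : schedule).

Definition counted L := [seq p.2 | p <- L & p.1].

Fixpoint sched_vDelta acc L : nat :=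
  match L with
  | [::] => 0
  | (b, Y) :: L' => (if b then Delta (ominus Y acc) else 0) + sched_vDelta (acc :|: Y) L'
  end.

Definition sched_acc acc L := foldl (fun acc p => acc :|: p.2) acc L.

Definition prune L := [seq p <- L | p.2 != set0].

Lemma mem_counted L Y : (Y \in counted L) = ((true, Y) \in L).
Proof. by elim: L => [|[[] X] L IHL] //=; rewrite !inE IHL. Qed.

Lemma counted_cons b Y L : counted ((b, Y) :: L) = if b then Y :: counted L else counted L.
Proof. by case: b. Qed.

Lemma counted_cat L1 L2 : counted (L1 ++ L2) = counted L1 ++ counted L2.
Proof. by rewrite /counted filter_cat map_cat. Qed.

Lemma counted_prune L : counted (prune L) = [seq Y <- counted L | Y != set0].
Proof.
rewrite /counted /prune filter_map -!filter_predI; congr map.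
by apply: eq_filter => -[b Y]; rewrite /= andbC.
Qed.

Lemma sched_vDelta_cat acc L1 L2 :
  sched_vDelta acc (L1 ++ L2) = sched_vDelta acc L1 + sched_vDelta (sched_acc acc L1) L2.
Proof. by elim: L1 acc => [|[b Y] L1 IHL] acc //=; rewrite IHL addnA. Qed.

Lemma sched_vDelta_prune acc L : sched_vDelta acc (prune L) = sched_vDelta acc L.
Proof.
elim: L acc => [|[b Y] L IHL] acc //=.
by case: eqP => [->|_] /=; rewrite IHL // Delta_ominus0 setU0; case: b.
Qed.

Lemma sched_vDelta_uncounted acc L : counted L = [::] -> sched_vDelta acc L = 0.
Proof. by elim: L acc => [|[[] Y] L IHL] acc //= /IHL ->. Qed.

Lemma vDelta_sched s : vDelta s = sched_vDelta set0 [seq (true, Y) | Y <- s].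
Proof. by rewrite /vDelta; elim: s set0 => [|Y s IHs] acc //=; rewrite IHs. Qed.

Lemma counted_true (s : seq (pgraph k)) : counted [seq (true, Y) | Y <- s] = s.
Proof. by elim: s => //= Y s; rewrite counted_cons => ->. Qed.

End Schedules.

Section LowerBound.
Variables (R : realType) (k n : nat) (nt : R).
Local Open Scope ring_scope.
Hypotheses (n_gt0 : (0 < n)%N) (nt_gt0 : 0 < nt) (nt_le_n : nt <= n%:R).
Local Notation asg := (asg k n).
Implicit Types (G F : pgraph k) (T : jtree k) (S D : {set 'I_k.+1}) (a x : asg)
  (A B C : {set asg}).

Lemma relation_dom G A a : is_relation G A -> a \in A -> dom a = verts G.
Proof. by move=> /forall_inP relA /relA /eqP. Qed.

Lemma pathset_subset G A C : A \subset C -> pathset nt G C -> pathset nt G A.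
Proof.
move=> sAC [relC muC]; split=> [|F].
  by apply/forall_inP=> a aA; apply: (forall_inP relC); rewrite (subsetP sAC).
apply: le_trans (muC F); rewrite /mu_c ler_wpM2r ?invr_ge0 ?exprn_ge0 ?ler0n //.
rewrite ler_nat; apply/bigmax_leqP=> b domb; apply: leq_trans (leq_bigmax_cond b domb).
apply/subset_leq_card/subsetP=> a; rewrite !inE => /andP[aA ->].
by rewrite (subsetP sAC).
Qed.

Lemma mu_c_ge0 G F A : 0 <= mu_c R G F A.
Proof. by rewrite divr_ge0 ?exprn_ge0 ?ler0n. Qed.

Lemma card_le_mu_c G F A C :
  C \subset A -> {in C, forall c, dom c = verts G} -> agree_on (verts F) C ->
  #|C|%:R / n%:R ^+ #|verts G :\: verts F| <= mu_c R G F A.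
Proof.
move=> sCA domC agC; case: (set_0Vmem C) => [->|[c0 c0C]].
  by rewrite cards0 mul0r mu_c_ge0.
rewrite /mu_c ler_wpM2r ?invr_ge0 ?exprn_ge0 ?ler0n // ler_nat.
have [b domb eq_bc0] := exists_extension n_gt0 (verts F) c0.
apply: leq_trans (leq_bigmax_cond b (introT eqP domb)).
apply/subset_leq_card/subsetP => c cC; rewrite inE (subsetP sCA) //=.
apply/forall_inP => v; rewrite inE => /andP[vF vG].
rewrite (agC c c0) // eq_bc0 //.
by move: vG; rewrite -(domC c0 c0C) inE.
Qed.

Lemma pathset_mu_c G F A : pathset nt G A -> nt ^+ Delta_c G F * mu_c R G F A <= 1.
Proof.
case=> _ /(_ F) muA; apply: le_trans (ler_wpM2l (exprn_ge0 _ (ltW nt_gt0)) muA) _.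
by rewrite -exprMn div1r mulfV ?expr1n // gt_eqF.
Qed.

Lemma invr_expn_le d m : (d <= m)%N -> (n%:R ^+ m)^-1 <= (1 / nt) ^+ d.
Proof.
move=> le_dm; rewrite div1r -exprVn.
apply: le_trans (_ : n%:R^-1 ^+ d <= _).
  by apply: ler_wiXn2l le_dm; rewrite ?invr_ge0 ?ler0n // invf_le1 ?ltr0n // (ler_nat R 1).
apply: lerXn2r; rewrite ?nnegrE ?invr_ge0 ?ler0n ?(ltW nt_gt0) //.
by rewrite lef_pV2 ?posrE ?ltr0n.
Qed.

Lemma pathset1 G a : dom a = verts G -> pathset nt G [set a].
Proof.
move=> doma; split=> [|F]; first by apply/forall_inP=> b /set1P ->; rewrite doma.
apply: le_trans (invr_expn_le (Delta_c_le G F)).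
rewrite /mu_c -[X in _ <= X]mul1r ler_wpM2r ?invr_ge0 ?exprn_ge0 ?ler0n //.
rewrite (ler_nat R _ 1); apply/bigmax_leqP => b _; rewrite -(cards1 a).
by apply/subset_leq_card/subsetP => c; rewrite inE => /andP[].
Qed.

Definition admissible T1 T2 (t : {set asg} * {set asg} * {set asg}) : Prop :=
  [/\ pathset nt (label (JNode T1 T2)) t.1.1, pathset nt (label T1) t.1.2,
      pathset nt (label T2) t.2 & t.1.1 \subset bowtie (label T1) (label T2) t.1.2 t.2].

Lemma chi_node T1 T2 A : is_relation (label (JNode T1 T2)) A ->
  exists fam, [/\ {in fam, forall t, admissible T1 T2 t},
                  A \subset \bigcup_(t <- fam) t.1.1 &
                  chi nt (JNode T1 T2) A =
                    (\sum_(t <- fam) maxn (chi nt T1 t.1.2) (chi nt T2 t.2))%N].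
Proof.
move=> relA.
pose P m := exists fam, {in fam, forall t, admissible T1 T2 t} /\
  A \subset \bigcup_(t <- fam) t.1.1 /\
  m = (\sum_(t <- fam) maxn (chi nt T1 t.1.2) (chi nt T2 t.2))%N.
have -> : chi nt (JNode T1 T2) A = cmin P by [].
have [|fam [adm [covA ->]]] := @cmin_spec P; last by exists fam.
pose V1 := verts (label T1); pose V2 := verts (label T2).
pose fam := [seq ([set a], [set restrict V1 a], [set restrict V2 a]) | a <- enum A].
exists (\sum_(t <- fam) maxn (chi nt T1 t.1.2) (chi nt T2 t.2))%N, fam.
split; last split=> //.
  move=> t /mapP[a]; rewrite mem_enum => aA -> /=.
  have doma : dom a = V1 :|: V2 by rewrite (relation_dom relA aA) vertsU.
  split.
  - by apply: pathset1; rewrite doma vertsU.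
  - by apply/pathset1/dom_restrict; rewrite doma subsetUl.
  - by apply/pathset1/dom_restrict; rewrite doma subsetUr.
  by apply/subsetP=> b /set1P ->; rewrite inE doma eqxx !inE !eqxx.
apply/subsetP=> a aA; rewrite bigcup_seq; apply/bigcupP.
exists ([set a], [set restrict V1 a], [set restrict V2 a]); last exact: set11.
by apply/mapP; exists a; rewrite ?mem_enum.
Qed.

Lemma chi_gt0 T A :
  label T != set0 -> is_relation (label T) A -> A != set0 -> (0 < chi nt T A)%N.
Proof.
elim: T A => [e|T1 IH1 T2 IH2] A labelT relA.
  by rewrite /= (negbTE labelT) => /negbTE ->.
have [fam [adm covA ->]] := chi_node relA.
case/set0Pn => a /(subsetP covA); rewrite bigcup_seq => /bigcupP[t tfam at1].
have [_ [relB _] [relC _] /subsetP/(_ a at1)] := adm t tfam.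
rewrite inE => /and3P[_ aB aC].
rewrite (big_rem t tfam) /= ltn_addr // leq_max.
have [label1|label1] := eqVneq (label T1) set0.
  have label2 : label T2 != set0 by move: labelT; rewrite /= label1 set0U.
  by rewrite IH2 ?orbT //; apply/set0Pn; exists (restrict (verts (label T2)) a).
by rewrite IH1 //; apply/set0Pn; exists (restrict (verts (label T1)) a).
Qed.

Implicit Types (acc Y : pgraph k) (L : schedule k).

Fixpoint dens acc L A : R :=
  match L with
  | [::] => (A != set0)%:R
  | (b, Y) :: L' =>
    if b then (n%:R ^+ #|verts Y :\: verts acc|)^-1 *
      \sum_(x | dom x == verts Y :\: verts acc)
         dens (acc :|: Y) L' (fiber (verts Y :\: verts acc) x A)
    else \big[Num.max/0]_x dens (acc :|: Y) L' (fiber (verts Y :\: verts acc) x A)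
  end.

Lemma dens_ge0 acc L A : 0 <= dens acc L A.
Proof.
elim: L acc A => [|[[] Y] L IHL] acc A /=; first exact: ler0n.
  by rewrite mulr_ge0 ?invr_ge0 ?exprn_ge0 ?ler0n ?sumr_ge0.
exact: bigmax_ge_id.
Qed.

Lemma dens_set0 acc L : dens acc L set0 = 0.
Proof.
elim: L acc => [|[[] Y] L IHL] acc /=; first by rewrite eqxx.
  by rewrite big1 ?mulr0 // => x _; rewrite fiber_set0 IHL.
by apply: bigmax_eq_id => x _; rewrite fiber_set0 IHL.
Qed.

Lemma densU acc L A B : dens acc L (A :|: B) <= dens acc L A + dens acc L B.
Proof.
elim: L acc A B => [|[[] Y] L IHL] acc A B /=.
- have [->|[a aA]] := set_0Vmem A; first by rewrite set0U eqxx add0r.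
  have nzA : A != set0 by apply/set0Pn; exists a.
  rewrite nzA (_ : A :|: B != set0) ?lerDl //; apply/set0Pn; exists a.
  by rewrite inE aA.
- rewrite -mulrDr ler_wpM2l ?invr_ge0 ?exprn_ge0 ?ler0n // -big_split /=.
  by apply: ler_sum => x _; rewrite fiberU IHL.
- apply: bigmax_le => [|x _]; first by rewrite addr_ge0 ?bigmax_ge_id.
  by rewrite fiberU (le_trans (IHL _ _ _)) // lerD // (le_bigmax _ (fun x => dens _ L _)).
Qed.

Lemma dens_restrict D acc L A B :
  {in counted L, forall Y, verts Y \subset D} -> {in A, forall a, restrict D a \in B} ->
  dens acc L A <= dens acc L B.
Proof.
elim: L acc A B => [|[[] Y] L IHL] acc A B /= sLD sAB.
- have [->|[a aA]] := set_0Vmem A; first by rewrite eqxx ler0n.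
  have /negbTE-> : B != set0 by apply/set0Pn; exists (restrict D a); apply: sAB.
  by rewrite ler_nat leq_b1.
- have sYD : verts Y :\: verts acc \subset D.
    by apply: subset_trans (subsetDl _ _) (sLD _ (mem_head _ _)).
  rewrite ler_wpM2l ?invr_ge0 ?exprn_ge0 ?ler0n //; apply: ler_sum => x _.
  apply: IHL => [Z ZL|a ax]; first by rewrite sLD // inE ZL orbT.
  have /fiberP[aA _] := ax.
  by rewrite -(fiber_restrict _ _ sYD) (restrict_fiber ax) ?sAB.
- apply: bigmax_le => [|x _]; first exact: bigmax_ge_id.
  apply: le_trans (le_bigmax _ (fun x => dens _ L _) (restrict D x)).
  apply: IHL => // a ax; have /fiberP[aA _] := ax.
  by rewrite (restrict_fiber ax) ?sAB.
Qed.

Lemma dens_subset acc L A B : A \subset B -> dens acc L A <= dens acc L B.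
Proof.
move=> sAB; apply: (@dens_restrict setT) => [Y _|a aA]; first exact: subsetT.
by rewrite restrictT (subsetP sAB).
Qed.

Lemma dens_bigcup (I : Type) (r : seq I) (F : I -> {set asg}) acc L A :
  A \subset \bigcup_(i <- r) F i -> dens acc L A <= \sum_(i <- r) dens acc L (F i).
Proof.
move=> /(dens_subset acc L) /le_trans; apply; elim: r => [|i r IHr].
  by rewrite !big_nil dens_set0.
by rewrite !big_cons (le_trans (densU _ _ _ _)) // lerD.
Qed.

Lemma dens_prune acc L A : dens acc (prune L) A = dens acc L A.
Proof.
elim: L acc A => [|[b Y] L IHL] acc A //=.
case: eqP => [->|_] /=; last by case: b; [congr (_ * _)|]; apply: eq_bigr => x _; rewrite IHL.
rewrite verts0 set0D setU0 IHL; case: b.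
  rewrite cards0 expr0 invr1 mul1r (big_pred1 [ffun=> None]) ?fiber0S // => x.
  by rewrite /= dom_eq0.
apply/le_anti; rewrite (le_trans _ (le_bigmax _ _ [ffun=> None])) ?fiber0S //=.
by apply: bigmax_le => [|x _]; rewrite ?dens_ge0 ?fiber0S.
Qed.

Lemma dens_uncounted acc L A : counted L = [::] -> dens acc L A <= (A != set0)%:R.
Proof.
elim: L acc A => [|[[] Y] L IHL] acc A //= uncL.
apply: bigmax_le => [|x _]; first exact: ler0n.
apply: le_trans (IHL _ _ uncL) _; rewrite ler_nat.
by have [->|_] := eqVneq A set0; rewrite /= ?fiber_set0 ?eqxx ?leq_b1.
Qed.

Lemma card_le_dens D acc s A :
  {in A, forall a, dom a = D} -> agree_on (verts acc) A ->
  D \subset verts (acc :|: \bigcup_(Y <- s) Y) -> {in s, forall Y, verts Y \subset D} ->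
  #|A|%:R <= n%:R ^+ #|D :\: verts acc| * dens acc [seq (true, Y) | Y <- s] A.
Proof.
elim: s acc A => [|Y s IHs] acc A /= domA agA sD sDs.
  rewrite big_nil setU0 in sD.
  have -> : D :\: verts acc = set0 by apply/eqP; rewrite setD_eq0.
  rewrite cards0 expr0 mul1r; have [->|[a0 a0A]] := set_0Vmem A; first by rewrite cards0.
  rewrite (_ : A != set0) ?ler_nat; last by apply/set0Pn; exists a0.
  apply: (@leq_trans #|[set a0]|); last by rewrite cards1.
  apply/subset_leq_card/subsetP => a aA; apply/set1P.
  rewrite -(restrict_eq (domA a aA) (fun _ _ => erefl)).
  by apply: restrict_eq (domA _ a0A) _ => v /(subsetP sD); apply: agA.
set S := verts Y :\: verts acc.
have sYD : verts Y \subset D by apply: sDs; exact: mem_head.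
have sSD : S \subset D by apply: subset_trans sYD; apply: subsetDl.
have -> : #|D :\: verts acc| = #|S| + #|D :\: verts (acc :|: Y)|.
  by rewrite -(cardsID (verts Y) (D :\: verts acc)) vertsU setDDl setIC setIDA (setIidPl sYD).
rewrite exprD mulrAC mulVKf ?expf_neq0 ?pnatr_eq0 -?lt0n // mulr_suml.
rewrite (card_fibers (S := S)) => [|a /domA ->//]; rewrite natr_sum; apply: ler_sum => x _.
rewrite mulrC; apply: IHs => [a /fiberP[/domA]//|||Z Zs].
- by rewrite vertsU; apply: agree_on_fiber.
- by move: sD; rewrite big_cons setUA.
- by apply: sDs; rewrite inE Zs orbT.
Qed.

Lemma dens_trade_head G1 G2 acc L A B C :
  {in counted L, forall Y, verts Y \subset verts G1} ->
  A \subset bowtie G1 G2 B C -> agree_on (verts acc) A ->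
  dens acc ((true, G2) :: L) A <= mu_c R G2 acc C * dens acc ((false, G2) :: L) B.
Proof.
move=> sLG1 sA agA /=.
set S := verts G2 :\: verts acc.
set M := \big[Num.max/0]_x dens (acc :|: G2) L (fiber S x B).
have M_ge0 : 0 <= M by apply: bigmax_ge_id.
set Z := restrict (verts G2) @: A.
have dens_fiber x : dens (acc :|: G2) L (fiber S x A) <= (fiber S x A != set0)%:R * M.
  have [->|_] := eqVneq (fiber S x A) set0; first by rewrite dens_set0 mul0r.
  rewrite mul1r; apply: le_trans (le_bigmax _ (fun x => dens _ L _) (restrict (verts G1) x)).
  apply: dens_restrict sLG1 _ => a ax.
  by have /bowtieP[] := subsetP (fiber_bowtie S x sA) a ax.
have card_fibers_Z : (\sum_(x | dom x == S) (fiber S x A != set0 : nat) <= #|Z|)%N.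
  apply: leq_trans (sum_fibers_neq0 _ _) _.
  rewrite (_ : restrict S @: A = restrict S @: Z) ?leq_imset_card //.
  by rewrite -imset_comp; apply: eq_imset => a; rewrite /= restrict_restrict ?subsetDl.
have muZ : #|Z|%:R / n%:R ^+ #|S| <= mu_c R G2 acc C.
  apply: card_le_mu_c.
  - by apply/subsetP=> _ /imsetP[a /(subsetP sA)/bowtieP[] _ _ aC ->].
  - move=> _ /imsetP[a /(subsetP sA)/bowtieP[doma _ _] ->].
    by rewrite dom_restrict ?doma ?subsetUr.
  - by move=> _ _ /imsetP[a aA ->] /imsetP[b bA ->] v vacc; rewrite !ffunE (agA a b).
apply: le_trans (_ : (n%:R ^+ #|S|)^-1 * (#|Z|%:R * M) <= _).
  rewrite ler_wpM2l ?invr_ge0 ?exprn_ge0 ?ler0n //.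
  apply: le_trans (ler_sum _ (fun x _ => dens_fiber x)) _.
  by rewrite -mulr_suml -natr_sum ler_wpM2r // ler_nat.
by rewrite mulrA (mulrC _ #|Z|%:R) ler_wpM2r.
Qed.

Lemma dens_trade G1 G2 acc L1 L2 A B C :
  {in counted (L1 ++ L2), forall Y, verts Y \subset verts G1} ->
  A \subset bowtie G1 G2 B C -> agree_on (verts acc) A ->
  dens acc (L1 ++ (true, G2) :: L2) A <=
    mu_c R G2 (sched_acc acc L1) C * dens acc (L1 ++ (false, G2) :: L2) B.
Proof.
elim: L1 acc A B => [|[b Y] L1 IHL] acc A B sLG1 sA agA; first exact: (dens_trade_head sLG1).
set S := verts Y :\: verts acc.
have agS x : agree_on (verts (acc :|: Y)) (fiber S x A).
  by rewrite vertsU; apply: agree_on_fiber.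
case: b sLG1 => /= sLG1.
  have sSG1 : S \subset verts G1 by apply: subset_trans (subsetDl _ _) (sLG1 _ (mem_head _ _)).
  rewrite mulrCA ler_wpM2l ?invr_ge0 ?exprn_ge0 ?ler0n // mulr_sumr; apply: ler_sum => x _.
  apply: IHL (agS x) => [Z ZL|]; first by rewrite sLG1 // inE ZL orbT.
  by rewrite -[X in bowtie _ _ X _](fiber_restrict _ _ sSG1); apply: fiber_bowtie.
apply: bigmax_le => [|x _]; first by rewrite mulr_ge0 ?mu_c_ge0 ?bigmax_ge_id.
apply: le_trans (IHL _ _ _ sLG1 (fiber_bowtie S x sA) (agS x)) _.
by rewrite ler_wpM2l ?mu_c_ge0 //; apply: (le_bigmax _ (fun x => dens _ _ (fiber S x B))).
Qed.

Lemma dens_single_le acc L Y A :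
  counted L = [:: Y] -> pathset nt Y A -> agree_on (verts acc) A ->
  nt ^+ sched_vDelta acc L * dens acc L A <= 1.
Proof.
elim: L acc A => [//|[[] X] L IHL] acc A /=.
  case=> -> uncL pathA agA; rewrite sched_vDelta_uncounted // addn0.
  apply: le_trans (pathset_mu_c acc pathA); rewrite ler_wpM2l ?exprn_ge0 ?(ltW nt_gt0) //.
  set S := verts Y :\: verts acc.
  apply: le_trans (_ : n%:R ^- #|S| * #|A|%:R <= _); last first.
    by rewrite mulrC; apply: card_le_mu_c => // a /(relation_dom (proj1 pathA)).
  rewrite ler_wpM2l ?invr_ge0 ?exprn_ge0 ?ler0n //.
  apply: le_trans (_ : \sum_(x | dom x == S) (fiber S x A != set0 : nat)%:R <= _).
    by apply: ler_sum => x _; apply: dens_uncounted.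
  by rewrite -natr_sum ler_nat (leq_trans (sum_fibers_neq0 _ _)) ?leq_imset_card.
move=> countL pathA agA; rewrite add0n.
elim/big_ind: _ => [|u w le_u le_w|x _]; first by rewrite mulr0 ler01.
  by rewrite maxEle; case: ifP.
apply: IHL countL (pathset_subset (fiber_subset _ _ _) pathA) _.
by rewrite vertsU; apply: agree_on_fiber.
Qed.

Lemma chi_bound_single T L A :
  label T != set0 -> counted L = [:: label T] -> pathset nt (label T) A ->
  nt ^+ sched_vDelta set0 L * dens set0 L A <= (chi nt T A)%:R.
Proof.
move=> labelT countL pathA; have [->|nzA] := eqVneq A set0.
  by rewrite dens_set0 mulr0 ler0n.
apply: le_trans (dens_single_le countL pathA (agree_on_verts0 (A := A))) _.
by rewrite ler1n chi_gt0 // (proj1 pathA).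
Qed.

Definition counts_branch T L := exists2 B, B \in branches T & perm_eq (counted L) (undup B).

(* An empty leaf has complexity 0, hence the side condition on [label T]. *)
Definition chi_lower_bound T := forall L A,
  label T != set0 -> counts_branch T L -> pathset nt (label T) A ->
  nt ^+ sched_vDelta set0 L * dens set0 L A <= (chi nt T A)%:R.

Section NodeStep.
Variables (U U' : jtree k) (B1 : seq (pgraph k)) (L : schedule k) (A B C : {set asg}).
Hypotheses (B1U : B1 \in branches U)
  (permL : perm_eq (counted L) (undup (label U' :: B1)))
  (pathB : pathset nt (label U) B) (pathC : pathset nt (label U') C)
  (sA : A \subset bowtie (label U) (label U') B C).

Lemma chi_bound_empty_side : label U = set0 -> label U' != set0 ->
  nt ^+ sched_vDelta set0 L * dens set0 L A <= (chi nt U' C)%:R.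
Proof.
move=> label0 labelU'.
(* No induction hypothesis is available for the empty [label U]; its branch
   graphs are all empty and [prune] discards them. *)
have B1_0 Y : Y \in B1 -> Y = set0.
  by move/(branches_subset B1U); rewrite label0 subset0 => /eqP.
have countL : counted (prune L) = [:: label U'].
  apply: perm_small_eq => //; rewrite counted_prune.
  apply: perm_trans (perm_filter _ permL) _.
  have /negbTE notinB1 : label U' \notin B1 by apply: contra labelU' => /B1_0 ->.
  rewrite /= notinB1 /= labelU' (eq_in_filter (a2 := pred0)) ?filter_pred0 // => Y.
  by rewrite mem_undup => /B1_0 ->; rewrite eqxx.
rewrite -sched_vDelta_prune -dens_prune.
apply: le_trans (chi_bound_single labelU' countL pathC).
rewrite ler_wpM2l ?exprn_ge0 ?(ltW nt_gt0) //.
apply: (@dens_restrict (verts (label U'))) => [Y|a /(subsetP sA)/bowtieP[] //].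
by rewrite countL inE => /eqP ->.
Qed.

Hypotheses (IHU : chi_lower_bound U) (labelU : label U != set0).

Lemma chi_bound_counted_side : label U' \in B1 ->
  nt ^+ sched_vDelta set0 L * dens set0 L A <= (chi nt U B)%:R.
Proof.
move=> inB1; have permL' : perm_eq (counted L) (undup B1) by move: permL; rewrite /= inB1.
apply: le_trans (IHU labelU (ex_intro2 _ _ B1 B1U permL') pathB).
rewrite ler_wpM2l ?exprn_ge0 ?(ltW nt_gt0) //.
apply: (@dens_restrict (verts (label U))) => [Y|a /(subsetP sA)/bowtieP[] //].
by rewrite (perm_mem permL') mem_undup => /(branches_subset B1U)/subset_verts.
Qed.

Lemma chi_bound_trade_side : label U' \notin B1 ->
  nt ^+ sched_vDelta set0 L * dens set0 L A <= (chi nt U B)%:R.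
Proof.
move=> notinB1.
have [L1 [L2 eqL]] : exists L1 L2, L = L1 ++ (true, label U') :: L2.
  have /splitPr[L1 L2] : (true, label U') \in L.
    by rewrite -mem_counted (perm_mem permL) mem_undup mem_head.
  by exists L1, L2.
set L' := L1 ++ (false, label U') :: L2.
have countL' : counted L' = counted L1 ++ counted L2 by rewrite counted_cat.
have permL' : perm_eq (counted L') (undup B1).
  move: permL; rewrite eqL /= (negbTE notinB1) countL' counted_cat counted_cons.
  by rewrite -cat1s perm_catCA /= perm_cons.
have sL' : {in counted (L1 ++ L2), forall Y, verts Y \subset verts (label U)}.
  move=> Y; rewrite counted_cat -countL' (perm_mem permL') mem_undup.
  by move/(branches_subset B1U)/subset_verts.
(* Uncounting [label U'] drops from the exponent exactly the [Delta_c] term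
   that pays for the factor [mu_c] introduced by [dens_trade]. *)
have -> : sched_vDelta set0 L =
          (sched_vDelta set0 L' + Delta_c (label U') (sched_acc set0 L1))%N.
  by rewrite eqL !sched_vDelta_cat /= add0n addnCA addnC.
rewrite exprD -mulrA eqL.
apply: le_trans (IHU labelU (ex_intro2 _ _ B1 B1U permL') pathB).
rewrite ler_wpM2l ?exprn_ge0 ?(ltW nt_gt0) //.
apply: le_trans (ler_wpM2l (exprn_ge0 _ (ltW nt_gt0))
  (dens_trade sL' sA (agree_on_verts0 (A := A)))) _.
by rewrite mulrA -[X in _ <= X]mul1r ler_wpM2r ?dens_ge0 ?pathset_mu_c.
Qed.

End NodeStep.

Lemma chi_bound_side U U' (B1 : seq (pgraph k)) L A B C :
  chi_lower_bound U -> label U :|: label U' != set0 -> B1 \in branches U ->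
  perm_eq (counted L) (undup (label U' :: B1)) ->
  pathset nt (label U) B -> pathset nt (label U') C ->
  A \subset bowtie (label U) (label U') B C ->
  nt ^+ sched_vDelta set0 L * dens set0 L A <= (maxn (chi nt U B) (chi nt U' C))%:R.
Proof.
move=> IHU labelUU' B1U permL pathB pathC sA.
have [label0|labelU] := eqVneq (label U) set0.
  have labelU' : label U' != set0 by rewrite label0 set0U in labelUU'.
  apply: le_trans (chi_bound_empty_side B1U permL pathC sA label0 labelU') _.
  by rewrite ler_nat leq_maxr.
apply: le_trans (_ : _ <= (chi nt U B)%:R) _; last by rewrite ler_nat leq_maxl.
have [inB1|notinB1] := boolP (label U' \in B1).
  exact: chi_bound_counted_side B1U permL pathB sA IHU labelU inB1.
exact: chi_bound_trade_side B1U permL pathB pathC sA IHU labelU notinB1.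
Qed.

Lemma chi_lower_bound_node T1 T2 :
  chi_lower_bound T1 -> chi_lower_bound T2 -> chi_lower_bound (JNode T1 T2).
Proof.
move=> IH1 IH2 L A labelT [B BT permB] pathA.
have [fam [adm covA ->]] := chi_node (proj1 pathA).
apply: le_trans (ler_wpM2l (exprn_ge0 _ (ltW nt_gt0)) (dens_bigcup set0 L covA)) _.
rewrite mulr_sumr natr_sum !big_seq; apply: ler_sum => t /adm[_ pathB pathC sA].
move: BT; rewrite mem_cat => /orP[]/mapP[B1 B1T eqB]; rewrite {B}eqB in permB.
  exact: chi_bound_side IH1 labelT B1T permB pathB pathC sA.
rewrite maxnC; apply: chi_bound_side IH2 _ B1T permB pathC pathB _.
  by rewrite setUC.
by rewrite bowtieC.
Qed.

Lemma chi_lower_bound_all T : chi_lower_bound T.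
Proof.
elim: T => [e|T1 IH1 T2 IH2]; last exact: chi_lower_bound_node.
move=> L A labelT [B]; rewrite inE => /eqP -> permL pathA.
by apply: chi_bound_single => //; apply: perm_small_eq permL.
Qed.

Lemma mu_le_dens T (B s : seq (pgraph k)) A :
  label T = pathk k -> B \in branches T -> perm_eq s (undup B) ->
  is_relation (pathk k) A -> mu R (pathk k) A <= dens set0 [seq (true, Y) | Y <- s] A.
Proof.
move=> labelT BT permB relA.
have cover : pathk k \subset \bigcup_(Y <- s) Y.
  apply/subsetP=> j; rewrite -labelT => /(branches_cover BT)[Y YB jY].
  by rewrite bigcup_seq; apply/bigcupP; exists Y; rewrite // (perm_mem permB) mem_undup.
rewrite /mu ler_pdivrMr ?exprn_gt0 ?ltr0n // mulrC.
have := @card_le_dens (verts (pathk k)) set0 s A.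
rewrite [X in _ :\: X]verts0 setD0; apply; first by move=> a /(relation_dom relA).
- exact: agree_on_verts0.
- by rewrite set0U; exact: subset_verts cover.
- by move=> Y _; apply/subset_verts/subsetT.
Qed.

End LowerBound.

Local Open Scope ring_scope.

Theorem lemma6p10 (R : realType) (k n : nat) (nt : R) :
  (0 < k)%N -> (0 < n)%N -> 0 < nt -> nt <= n%:R ->
  forall (T : jtree k) (A : {set asg k n}),
    join_tree_of (pathk k) T ->
    pathset nt (pathk k) A ->
    nt ^+ Psi T * mu R (pathk k) A <= (chi nt T A)%:R.
Proof.
move=> k_gt0 n_gt0 nt_gt0 nt_le_n T A labelT pathA.
have [B BT [s permB ->]] := Psi_attained T.
have labelT0 : label T != set0.
  by rewrite labelT; apply/set0Pn; exists (Ordinal k_gt0); rewrite inE.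
have countB : counts_branch T [seq (true, Y) | Y <- s] by exists B; rewrite ?counted_true.
rewrite vDelta_sched.
apply: le_trans (chi_lower_bound_all n_gt0 nt_gt0 nt_le_n labelT0 countB _).
  rewrite ler_wpM2l ?exprn_ge0 ?(ltW nt_gt0) //.
  exact: mu_le_dens labelT BT permB (proj1 pathA).
by rewrite labelT.
Qed.
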